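(* Fix an integer $c\ge1$. For each $n$, let $C_n=\{V_{1,n},\dots,V_{c,n}\}$ be a partition of $\{1,\dots,n\}$ with $n_i:=|V_{i,n}|$, let $P_n$ be a symmetric $c\times c$ matrix with entries in $[0,1]$, and let $G_n\sim\mathrm{SBM}(n;C_n,P_n)$. Let $s_n(i,i):=\binom{n_i}{2}$ and $s_n(i,j):=n_in_j$ for $i\ne j$, and let $$\mathcal{K}:=\Big\{(i,j)\in\{1,\dots,c\}^2:\ \limsup_{n\to\infty}s_n(i,j)\,(1-P_n(i,j))>0\Big\}.$$ Suppose that $n_in_j\to\infty$ for each $(i,j)\in\mathcal{K}$, and that there is a constant $C>1$ such that for all sufficiently large $n$, $$\sum_{k=1}^c n_k\,P_n(i,k)P_n(k,j)\ \ge\ C\ln(n_in_j)\quad\text{for all }(i,j)\in\mathcal{K}.$$ Then $\operatorname{diam}(G_n)\le 2$ with probability tending to $1$ as $n\to\infty$.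
   Context: Stochastic Block Model: $G\sim\mathrm{SBM}(n;C,P)$, for a partition $C=\{V_1,\dots,V_c\}$ of $V=\{1,\dots,n\}$ and a symmetric $c\times c$ matrix $P$ with entries in $[0,1]$, is the random simple undirected graph on $V$ in which, independently for each pair of distinct vertices $u\in V_i$, $v\in V_j$, the edge $\{u,v\}$ is present with probability $P(i,j)$. The diameter is the maximum shortest-path distance between two vertices ($\infty$ if disconnected). *)

From HB Require Import structures.
From Stdlib Require Import Reals.
From mathcomp Require Import all_boot.
Set Implicit Arguments.
Unset Strict Implicit.
Unset Printing Implicit Defensive.

Lemma Rplus_assoc' : associative Rplus.
Proof. by move=> x y z; rewrite Rplus_assoc. Qed.
Lemma Rmult_assoc' : associative Rmult.
Proof. by move=> x y z; rewrite Rmult_assoc. Qed.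
HB.instance Definition _ := Monoid.isComLaw.Build R (IZR 0) Rplus Rplus_assoc' Rplus_comm Rplus_0_l.
HB.instance Definition _ := Monoid.isComLaw.Build R (IZR 1) Rmult Rmult_assoc' Rmult_comm Rmult_1_l.

(* Vertices of G_n are 'I_n (= {0,...,n-1}); the partition C_n into c labelled
   blocks is given by a labelling f : 'I_n -> 'I_c, V_{i,n} = f^{-1}(i). *)
Definition block_size (n c : nat) (f : 'I_n -> 'I_c) (i : 'I_c) : nat :=
  #|[set v | f v == i]|.

Definition pair_count (n c : nat) (f : 'I_n -> 'I_c) (i j : 'I_c) : R :=
  if i == j then INR 'C(block_size f i, 2)
  else INR (block_size f i * block_size f j).

Definition limsup_pos (a : nat -> R) : Prop :=
  exists eps : R, Rlt 0 eps /\ forall N : nat, exists n : nat, (N <= n)%nat /\ Rlt eps (a n).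

Definition in_K (c : nat) (f : forall n : nat, 'I_n -> 'I_c)
  (P : nat -> 'I_c -> 'I_c -> R) (i j : 'I_c) : Prop :=
  limsup_pos (fun n => Rmult (pair_count (f n) i j) (Rminus 1 (P n i j))).

(* A simple graph on 'I_n is a set of ordered pairs (u,v) with u < v. *)
Definition upper_pairs (n : nat) : {set ('I_n * 'I_n)} := [set p : 'I_n * 'I_n | (nat_of_ord p.1 < nat_of_ord p.2)%N].

Definition graph_adj (n : nat) (E : {set ('I_n * 'I_n)}) (u v : 'I_n) : bool :=
  ((u, v) \in E) || ((v, u) \in E).

Definition diam_le2 (n : nat) (E : {set ('I_n * 'I_n)}) : bool :=
  [forall u : 'I_n, forall v : 'I_n, (u != v) ==>
     (graph_adj E u v || [exists w : 'I_n, graph_adj E u w && graph_adj E w v])].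

Definition sbm_weight (n c : nat) (f : 'I_n -> 'I_c) (P : 'I_c -> 'I_c -> R)
  (E : {set ('I_n * 'I_n)}) : R :=
  \big[Rmult/(IZR 1)]_(p in upper_pairs n)
     (if p \in E then P (f p.1) (f p.2) else Rminus 1 (P (f p.1) (f p.2))).

Definition sbm_prob (n c : nat) (f : 'I_n -> 'I_c) (P : 'I_c -> 'I_c -> R)
  (A : pred {set ('I_n * 'I_n)}) : R :=
  \big[Rplus/(IZR 0)]_(E : {set ('I_n * 'I_n)} | (E \subset upper_pairs n) && A E)
     sbm_weight f P E.

(* If diam(G_n) > 2, some pair u != v is neither adjacent nor joined through a
   common neighbour.  For u in V_i and v in V_j this has probability at most
   1 - P(i,j), and, the events "x is a common neighbour of u and v" being
   independent for x <> u, v, at most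
     prod_x (1 - P(i, f x) P(f x, j)) <= e^2 exp (- sum_k n_k P(i,k) P(k,j))
                                      <= e^2 (n_i n_j)^(-C).
   By the union bound over the at most n_i n_j, resp. 2 s_n(i,j), such pairs,
   the block (i,j) contributes at most e^2 (n_i n_j)^(1-C) -> 0 when (i,j) is in
   K, and at most 2 s_n(i,j) (1 - P_n(i,j)) -> 0 when it is not. *)

From HB Require Import structures.
From Stdlib Require Import Reals Lra Classical.
From mathcomp Require Import all_boot zify.
Set Implicit Arguments.
Unset Strict Implicit.
Unset Printing Implicit Defensive.
Open Scope R_scope.

Lemma Rmult_0_l' : left_zero 0 Rmult. Proof. exact: Rmult_0_l. Qed.
Lemma Rmult_0_r' : right_zero 0 Rmult. Proof. exact: Rmult_0_r. Qed.
HB.instance Definition _ := Monoid.isMulLaw.Build R 0 Rmult Rmult_0_l' Rmult_0_r'.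
Lemma Rmult_plus_distr_r' : left_distributive Rmult Rplus.
Proof. exact: Rmult_plus_distr_r. Qed.
Lemma Rmult_plus_distr_l' : right_distributive Rmult Rplus.
Proof. exact: Rmult_plus_distr_l. Qed.
HB.instance Definition _ :=
  Monoid.isAddLaw.Build R Rmult Rplus Rmult_plus_distr_r' Rmult_plus_distr_l'.

Lemma sumR_ge0 (I : Type) (r : seq I) (P : pred I) (F : I -> R) :
  (forall i, P i -> 0 <= F i) -> 0 <= \big[Rplus/0]_(i <- r | P i) F i.
Proof. by move=> F0; apply: big_ind => //; [lra | move=> x y; lra]. Qed.

Lemma prodR_ge0 (I : Type) (r : seq I) (P : pred I) (F : I -> R) :
  (forall i, P i -> 0 <= F i) -> 0 <= \big[Rmult/1]_(i <- r | P i) F i.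
Proof. by move=> F0; apply: big_ind => //; [lra | exact: Rmult_le_pos]. Qed.

Lemma ler_sumR (I : Type) (r : seq I) (P : pred I) (F G : I -> R) :
  (forall i, P i -> F i <= G i) ->
  \big[Rplus/0]_(i <- r | P i) F i <= \big[Rplus/0]_(i <- r | P i) G i.
Proof. by move=> FG; apply: big_ind2 => //; [lra | move=> *; lra]. Qed.

Lemma sumR_const (T : finType) (P : pred T) (K : R) :
  \big[Rplus/0]_(v | P v) K = INR #|[pred v | P v]| * K.
Proof.
rewrite big_const; elim: #|P| => [|k IHk]; first by rewrite /=; ring.
by rewrite iterS IHk S_INR; ring.
Qed.

Lemma ler_sumR_term (T : finType) (P : pred T) (F : T -> R) (a : T) :
  P a -> (forall i, P i -> 0 <= F i) -> F a <= \big[Rplus/0]_(i | P i) F i.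
Proof.
move=> Pa F0; rewrite (bigD1 a) //=.
have : 0 <= \big[Rplus/0]_(i | P i && (i != a)) F i.
  by apply: sumR_ge0 => i /andP [/F0].
lra.
Qed.

Lemma prod_pair (T : finType) (a b : T) (F : T -> R) : a != b ->
  (forall p, p != a -> p != b -> F p = 1) -> \big[Rmult/1]_(p : T) F p = F a * F b.
Proof.
move=> ab F1; rewrite (bigD1 a) //= (bigD1 b) 1?eq_sym //= big1 ?Rmult_1_r //.
by move=> p /andP [pa pb]; exact: F1.
Qed.

Lemma prod_1sub_le_exp (I : Type) (r : seq I) (x : I -> R) :
  (forall i, 0 <= x i <= 1) ->
  \big[Rmult/1]_(i <- r) (1 - x i) <= exp (- \big[Rplus/0]_(i <- r) x i).
Proof.
move=> x01; elim: r => [|i r IHr]; first by rewrite !big_nil Ropp_0 exp_0; lra.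
rewrite !big_cons Ropp_plus_distr exp_plus.
have := exp_ineq1_le (- x i); have := x01 i => ? ?.
apply: Rmult_le_compat; [lra | | lra | exact: IHr].
by apply: prodR_ge0 => j _; have := x01 j; lra.
Qed.

Lemma exp_le x y : x <= y -> exp x <= exp y.
Proof. by case=> [/exp_increasing/Rlt_le | ->]; [| exact: Rle_refl]. Qed.

Lemma sumR_le_drop2 (T : finType) (a b : T) (F : T -> R) :
  a != b -> F a <= 1 -> F b <= 1 ->
  \big[Rplus/0]_(x : T) F x <= \big[Rplus/0]_(x | (x != a) && (x != b)) F x + 2.
Proof.
move=> ab Fa Fb; rewrite (bigD1 a) //= (bigD1 b) 1?eq_sym //=.
by rewrite (eq_bigl (fun x => (x != a) && (x != b))) //; lra.
Qed.

Definition indR (b : bool) : R := if b then 1 else 0.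

Lemma indR_ge0 b : 0 <= indR b. Proof. by case: b => /=; lra. Qed.
Lemma indR_le1 b : indR b <= 1. Proof. by case: b => /=; lra. Qed.
Lemma indR_negb b : indR (~~ b) = 1 - indR b. Proof. by case: b => /=; ring. Qed.
Lemma indR_andb a b : indR (a && b) = indR a * indR b.
Proof. by case: a; case: b => /=; ring. Qed.

Lemma indR_exists_le_sum (T : finType) (p : pred T) :
  indR [exists x, p x] <= \big[Rplus/0]_(x : T) indR (p x).
Proof.
case: existsP => [[x px] | _]; last by apply: sumR_ge0 => x _; exact: indR_ge0.
have := ler_sumR_term (P := xpredT) (F := fun x => indR (p x)) (isT : xpredT x).
by rewrite /= px; apply=> y _; exact: indR_ge0.
Qed.

Section ProductMeasure.

Variables (T : finType) (w : T -> bool -> R).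

Definition weight (E : {set T}) : R := \big[Rmult/1]_(p : T) w p (p \in E).

Definition expect (g : {set T} -> R) : R :=
  \big[Rplus/0]_(E : {set T}) (weight E * g E).

Definition prob (A : pred {set T}) : R := expect (fun E => indR (A E)).

Lemma expect_ext (g h : {set T} -> R) : g =1 h -> expect g = expect h.
Proof. by move=> gh; apply: eq_bigr => E _; rewrite gh. Qed.

Lemma expectD (g h : {set T} -> R) :
  expect (fun E => g E + h E) = expect g + expect h.
Proof. by rewrite /expect -big_split /=; apply: eq_bigr => E _; ring. Qed.

Lemma expectZ (k : R) (g : {set T} -> R) :
  expect (fun E => k * g E) = k * expect g.
Proof. by rewrite /expect big_distrr /=; apply: eq_bigr => E _; ring. Qed.

Lemma expect_sum (I : Type) (r : seq I) (P : pred I) (g : I -> {set T} -> R) :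
  expect (fun E => \big[Rplus/0]_(i <- r | P i) g i E) =
  \big[Rplus/0]_(i <- r | P i) expect (g i).
Proof.
rewrite /expect [RHS]exchange_big /=; apply: eq_bigr => E _; exact: big_distrr.
Qed.

(* A set E is the same as its indicator function, so the sum over all E of a
   product over coordinates expands the product of the coordinate sums. *)
Lemma expect_prod (h : T -> bool -> R) :
  expect (fun E => \big[Rmult/1]_(p : T) h p (p \in E)) =
  \big[Rmult/1]_(p : T) (w p true * h p true + w p false * h p false).
Proof.
have -> : \big[Rmult/1]_(p : T) (w p true * h p true + w p false * h p false) =
          \big[Rmult/1]_(p : T) \big[Rplus/0]_(b : bool) (w p b * h p b).
  by apply: eq_bigr => p _; rewrite big_bool.
rewrite /expect bigA_distr_bigA (reindex (fun g : {ffun T -> bool} => [set p | g p])) /=.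
  apply: eq_bigr => g _; rewrite /weight -big_split.
  by apply: eq_bigr => p _; rewrite inE.
exists (fun E : {set T} => [ffun p => p \in E]).
  by move=> g _; apply/ffunP => p; rewrite ffunE inE.
by move=> E _; apply/setP => p; rewrite inE ffunE.
Qed.

Definition weight_on (S A : {set T}) : R := \big[Rmult/1]_(p in S) w p (p \in A).

Lemma weight_split (S E : {set T}) :
  weight E = weight_on S (E :&: S) * weight_on (~: S) (E :\: S).
Proof.
rewrite /weight /weight_on (bigID (mem S)) /=; congr (_ * _).
  by apply: eq_bigr => p pS; rewrite !inE pS andbT.
by apply: eq_big => [p | p /negbTE pS]; rewrite !inE ?pS.
Qed.

Lemma sum_setI_setD (S : {set T}) (h : {set T} -> {set T} -> R) :
  \big[Rplus/0]_(E : {set T}) h (E :&: S) (E :\: S) =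
  \big[Rplus/0]_(A : {set T} | A \subset S)
    \big[Rplus/0]_(B : {set T} | B \subset ~: S) h A B.
Proof.
rewrite pair_big_dep /= (reindex_onto (fun E => (E :&: S, E :\: S))
  (fun AB : {set T} * {set T} => AB.1 :|: AB.2)) /=.
  apply: eq_bigl => E; rewrite subsetIr setDE subsetIr /=.
  by apply/esym/eqP/setP => x; rewrite !inE; case: (x \in E); case: (x \in S).
move=> [A B] /= /andP [AS BS]; congr (_, _); apply/setP => x; rewrite !inE;
  have := subsetP AS x; have := subsetP BS x; rewrite inE;
  case: (x \in A); case: (x \in B); case: (x \in S) => //= H1 H2;
  by [have := H1 isT | have := H2 isT].
Qed.

Lemma expect_split (S : {set T}) (g h : {set T} -> R) :
  expect (fun E => g (E :&: S) * h (E :\: S)) =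
  (\big[Rplus/0]_(A : {set T} | A \subset S) (weight_on S A * g A)) *
  (\big[Rplus/0]_(B : {set T} | B \subset ~: S) (weight_on (~: S) B * h B)).
Proof.
rewrite /expect; under eq_bigr => E _ do rewrite (weight_split S E).
rewrite (sum_setI_setD S (fun A B => weight_on S A * weight_on (~: S) B * (g A * h B))).
rewrite big_distrl /=; apply: eq_bigr => A _.
by rewrite big_distrr /=; apply: eq_bigr => B _; ring.
Qed.

Definition supported_on (S : {set T}) (g : {set T} -> R) := forall E, g (E :&: S) = g E.

Lemma supported_on_sub (S U : {set T}) (g : {set T} -> R) :
  S \subset U -> supported_on S g -> supported_on U g.
Proof.
move=> SU gS E; rewrite -gS -[RHS]gS; congr g.
by rewrite -setIA (setIidPr SU).
Qed.

Lemma supported_on_prod (I : eqType) (r : seq I) (S : {set T}) (g : I -> {set T} -> R) :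
  (forall i, i \in r -> supported_on S (g i)) ->
  supported_on S (fun E => \big[Rmult/1]_(i <- r) g i E).
Proof.
move=> gS E; rewrite big_seq [RHS]big_seq.
by apply: eq_bigr => i ir; exact: gS.
Qed.

Hypothesis w_norm : forall p, w p true + w p false = 1.

Lemma expect1 : expect (fun _ => 1) = 1.
Proof.
transitivity (expect (fun E => \big[Rmult/1]_(p : T) (fun _ _ => 1) p (p \in E))).
  by apply: expect_ext => E; rewrite big1.
by rewrite (expect_prod (fun _ _ => 1)) big1 // => p _; rewrite !Rmult_1_r.
Qed.

Lemma probC (A : pred {set T}) : prob (fun E => ~~ A E) = 1 - prob A.
Proof.
rewrite /prob (expect_ext (h := fun E => 1 + -1 * indR (A E))) => [|E]; last first.
  by rewrite /= indR_negb; ring.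
by rewrite expectD expect1 expectZ; ring.
Qed.

Lemma expect_mul_supported (S : {set T}) (g h : {set T} -> R) :
  supported_on S g -> supported_on (~: S) h ->
  expect (fun E => g E * h E) = expect g * expect h.
Proof.
move=> gS hS.
(* The product weight splits along S, so each expectation below factors as X _ * Y _. *)
pose X k := \big[Rplus/0]_(A : {set T} | A \subset S) (weight_on S A * k A).
pose Y k := \big[Rplus/0]_(B : {set T} | B \subset ~: S) (weight_on (~: S) B * k B).
have XY k1 k2 : supported_on S k1 -> supported_on (~: S) k2 ->
    expect (fun E => k1 E * k2 E) = X k1 * Y k2.
  by move=> k1S k2S; rewrite -expect_split; apply: expect_ext => E; rewrite k1S setDE k2S.
have one U : supported_on U (fun _ => 1) by [].
have Eg : expect g = X g * Y (fun _ => 1).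
  by rewrite -XY //; apply: expect_ext => E; ring.
have Eh : expect h = X (fun _ => 1) * Y h.
  by rewrite -XY //; apply: expect_ext => E; ring.
have E1 : 1 = X (fun _ => 1) * Y (fun _ => 1).
  by rewrite -[LHS]expect1 -XY //; apply: expect_ext => E; ring.
rewrite XY // Eg Eh.
transitivity (X g * Y h * (X (fun _ => 1) * Y (fun _ => 1))); first by rewrite -E1; ring.
ring.
Qed.

Lemma expect_prod_supported (I : eqType) (r : seq I) (S : I -> {set T})
    (g : I -> {set T} -> R) :
  uniq r -> {in r &, forall i j, i != j -> [disjoint S i & S j]} ->
  (forall i, supported_on (S i) (g i)) ->
  expect (fun E => \big[Rmult/1]_(i <- r) g i E) = \big[Rmult/1]_(i <- r) expect (g i).
Proof.
move=> + + gS; elim: r => [_ _ | i r IHr /= /andP [ir ru] dis].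
  by rewrite big_nil; under expect_ext => E do rewrite big_nil; exact: expect1.
have rest : supported_on (~: S i) (fun E => \big[Rmult/1]_(j <- r) g j E).
  apply: supported_on_prod => j jr; apply: supported_on_sub (gS j).
  rewrite -disjoints_subset disjoint_sym; apply: dis; rewrite ?inE ?eqxx ?jr ?orbT //.
  by apply/eqP => ij; rewrite ij jr in ir.
rewrite big_cons; under expect_ext => E do rewrite big_cons.
rewrite (expect_mul_supported (gS i) rest) IHr // => j k jr kr; apply: dis;
  by rewrite inE ?jr ?kr orbT.
Qed.

Hypothesis w_ge0 : forall p b, 0 <= w p b.

Lemma expect_le (g h : {set T} -> R) : (forall E, g E <= h E) -> expect g <= expect h.
Proof.
move=> gh; apply: ler_sumR => E _; apply: Rmult_le_compat_l (gh E).
by apply: prodR_ge0 => p _.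
Qed.

Lemma prob_le (A B : pred {set T}) : (forall E, A E -> B E) -> prob A <= prob B.
Proof.
move=> AB; apply: expect_le => E; rewrite /indR.
by case AE : (A E); rewrite ?(AB E AE); case: (B E); lra.
Qed.

Lemma prob_ge0 (A : pred {set T}) : 0 <= prob A.
Proof.
apply: sumR_ge0 => E _; apply: Rmult_le_pos; last exact: indR_ge0.
by apply: prodR_ge0 => p _.
Qed.

Lemma prob_le1 (A : pred {set T}) : prob A <= 1.
Proof. by rewrite -expect1; apply: expect_le => E; exact: indR_le1. Qed.

End ProductMeasure.

Lemma two_bin2 k : (2 * 'C(k, 2) = k * (k - 1))%N.
Proof.
elim: k => [|k IHk] //; rewrite binS bin1 mulnDr IHk.
by case: k {IHk} => [|k] //=; nia.
Qed.

Lemma sum_pairs_by_block n c (fn : 'I_n -> 'I_c) (X : 'I_n -> 'I_n -> R) :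
  \big[Rplus/0]_(u : 'I_n) \big[Rplus/0]_(v | u != v) X u v =
  \big[Rplus/0]_(i : 'I_c) \big[Rplus/0]_(j : 'I_c)
     \big[Rplus/0]_(u | fn u == i) \big[Rplus/0]_(v | (u != v) && (fn v == j)) X u v.
Proof.
rewrite (partition_big fn predT) //=; apply: eq_bigr => i _.
rewrite -exchange_big /=; apply: eq_bigr => u _.
by rewrite (partition_big fn predT).
Qed.

Lemma sum_by_block n c (fn : 'I_n -> 'I_c) (F : 'I_c -> R) :
  \big[Rplus/0]_(w : 'I_n) F (fn w) = \big[Rplus/0]_(k : 'I_c) (INR (block_size fn k) * F k).
Proof.
rewrite (partition_big fn predT) //=; apply: eq_bigr => k _.
rewrite (eq_bigr (fun _ => F k)) => [|w /eqP <- //].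
by rewrite sumR_const /block_size; congr (INR _ * _); apply: eq_card => w; rewrite !inE.
Qed.

Lemma sum_block_pairs_const n c (fn : 'I_n -> 'I_c) (i j : 'I_c) (K : R) :
  \big[Rplus/0]_(u | fn u == i) \big[Rplus/0]_(v | (u != v) && (fn v == j)) K =
  INR (block_size fn i) * INR (block_size fn j - (i == j)) * K.
Proof.
have row u : fn u == i ->
    \big[Rplus/0]_(v | (u != v) && (fn v == j)) K = INR (block_size fn j - (i == j)) * K.
  move=> /eqP fu; rewrite sumR_const /block_size; congr (INR _ * _).
  have -> : #|[set v | fn v == j]| = #|[pred v | fn v == j]| by apply: eq_card => v; rewrite inE.
  case: (eqVneq i j) => [ij | ij] /=.
    rewrite [in RHS](cardD1 u) inE /= fu ij eqxx add1n subn1 /=.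
    by apply: eq_card => v; rewrite !inE /= eq_sym.
  rewrite subn0; apply: eq_card => v; rewrite !inE /=.
  case: (eqVneq (fn v) j) => [fv | _]; rewrite ?andbT ?andbF //.
  by apply/eqP => uv; move: ij; rewrite -fu -fv uv eqxx.
rewrite (eq_bigr _ row) sumR_const Rmult_assoc; congr (INR _ * _).
by rewrite /block_size; apply: eq_card => v; rewrite !inE.
Qed.

Lemma card_block_pairs_le_pair_count n c (fn : 'I_n -> 'I_c) (i j : 'I_c) :
  INR (block_size fn i) * INR (block_size fn j - (i == j)) <= 2 * pair_count fn i j.
Proof.
rewrite /pair_count; case: (eqVneq i j) => [<- | ij]; rewrite ?eqxx ?(negbTE ij).
  by rewrite -mult_INR multE -two_bin2 -multE mult_INR /=; lra.
rewrite subn0 -mult_INR multE; have := pos_INR (block_size fn i * block_size fn j); lra.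
Qed.

Lemma card_block_pairs_le n c (fn : 'I_n -> 'I_c) (i j : 'I_c) :
  INR (block_size fn i) * INR (block_size fn j - (i == j)) <=
  INR (block_size fn i * block_size fn j).
Proof. by rewrite -mult_INR; apply/le_INR/leP; rewrite leq_mul // leq_subr. Qed.

Definition dist_gt2 n (E : {set 'I_n * 'I_n}) (u v : 'I_n) : bool :=
  ~~ graph_adj E u v && ~~ [exists x, graph_adj E u x && graph_adj E x v].

Lemma diam_le2_negE n (E : {set 'I_n * 'I_n}) :
  ~~ diam_le2 E = [exists u, [exists v, (u != v) && dist_gt2 E u v]].
Proof.
rewrite /diam_le2 negb_forall; apply: eq_existsb => u.
rewrite negb_forall; apply: eq_existsb => v.
by rewrite negb_imply /dist_gt2 negb_or.
Qed.

Definition edge_coords n (u v : 'I_n) : {set 'I_n * 'I_n} := [set (u, v); (v, u)].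

Definition common_nbr_coords n (u v w : 'I_n) : {set 'I_n * 'I_n} :=
  edge_coords u w :|: edge_coords w v.

Lemma edge_coords_disjoint n (u v w : 'I_n) :
  u != v -> w != u -> [disjoint edge_coords w v & edge_coords u w].
Proof.
move=> uv wu; apply/pred0P => p /=; rewrite !inE.
by apply/negP => /andP [/orP [] /eqP -> /orP []];
  rewrite !xpair_eqE ?(negbTE wu) ?(eq_sym v u) ?(negbTE uv) ?andbF.
Qed.

Lemma common_nbr_coords_disjoint n (u v w w' : 'I_n) :
  u != v -> w != w' -> w != u -> w != v -> w' != u -> w' != v ->
  [disjoint common_nbr_coords u v w & common_nbr_coords u v w'].
Proof.
move=> uv ww' wu wv w'u w'v; apply/pred0P => p /=; rewrite !inE -!orbA.
by apply/negP => /andP [/or4P [] /eqP ->];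
  rewrite !xpair_eqE ?(eq_sym u w') ?(eq_sym v w') ?(eq_sym v u)
    ?(negbTE uv, negbTE ww', negbTE wu, negbTE wv, negbTE w'u, negbTE w'v) ?andbF.
Qed.

Lemma adj_supported n (u v : 'I_n) :
  supported_on (edge_coords u v) (fun E => indR (graph_adj E u v)).
Proof. by move=> E; rewrite /graph_adj !inE !eqxx orbT !andbT. Qed.

Lemma common_nbr_supported n (u v w : 'I_n) :
  supported_on (common_nbr_coords u v w)
    (fun E => indR (~~ (graph_adj E u w && graph_adj E w v))).
Proof. by move=> E; rewrite /graph_adj !inE !eqxx !orbT !andbT. Qed.

(* Pairs outside [upper_pairs n] get weight 1 on "absent": a graph on 'I_n is
   drawn as the set of its edges (u, v) with u < v. *)
Definition sbm_coord n c (fn : 'I_n -> 'I_c) (Pn : 'I_c -> 'I_c -> R)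
    (p : 'I_n * 'I_n) (b : bool) : R :=
  if p \in upper_pairs n then
    (if b then Pn (fn p.1) (fn p.2) else 1 - Pn (fn p.1) (fn p.2))
  else indR (~~ b).

Section StochasticBlockModel.

Variables (n c : nat) (fn : 'I_n -> 'I_c) (Pn : 'I_c -> 'I_c -> R).
Hypothesis Psym : forall i j, Pn i j = Pn j i.
Hypothesis P01 : forall i j, 0 <= Pn i j <= 1.

Local Notation mu := (sbm_coord fn Pn).

Lemma sbm_coord_ge0 p b : 0 <= mu p b.
Proof. by rewrite /sbm_coord; have := P01 (fn p.1) (fn p.2); case: ifP; case: b => /=; lra. Qed.

Lemma sbm_coord_norm p : mu p true + mu p false = 1.
Proof. by rewrite /sbm_coord; case: ifP => _ /=; ring. Qed.

Lemma sbm_prob_prob (A : pred {set 'I_n * 'I_n}) : sbm_prob fn Pn A = prob mu A.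
Proof.
rewrite /sbm_prob /prob /expect big_mkcond /=; apply: eq_bigr => E _.
case: (boolP (E \subset upper_pairs n)) => [EU | /subsetPn [p pE pU]] /=.
  rewrite /indR; case: (A E); last by ring.
  rewrite Rmult_1_r /weight (bigID (mem (upper_pairs n))) /= [X in _ * X]big1.
    by rewrite Rmult_1_r; apply: eq_bigr => p pU; rewrite /sbm_coord pU.
  move=> p /negbTE pU; rewrite /sbm_coord pU.
  by case: (boolP (p \in E)) => [/(subsetP EU) | _]; rewrite ?pU.
by rewrite /weight (bigD1 p) //= /sbm_coord (negbTE pU) pE /=; ring.
Qed.

Lemma prob_nonadj (u v : 'I_n) : u != v ->
  prob mu (fun E => ~~ graph_adj E u v) = 1 - Pn (fn u) (fn v).
Proof.
move=> uv; have uvvu : (u, v) != (v, u) by rewrite xpair_eqE negb_and uv.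
pose h p b := if p \in edge_coords u v then indR (~~ b) else 1.
have h1 p : p != (u, v) -> p != (v, u) -> h p =1 (fun=> 1).
  by move=> pu pv b; rewrite /h !inE (negbTE pu) (negbTE pv).
rewrite /prob (expect_ext mu (h := fun E => \big[Rmult/1]_(p : 'I_n * 'I_n) h p (p \in E))).
  rewrite expect_prod (prod_pair uvvu) => [|p pu pv]; last first.
    by rewrite !h1 // !Rmult_1_r sbm_coord_norm.
  rewrite /h !inE !eqxx orbT /= /sbm_coord /upper_pairs !inE /=.
  case: (ltngtP u v) => [_ | _ | /val_inj uv']; [ring | rewrite Psym; ring |].
  by rewrite uv' eqxx in uv.
move=> E; rewrite (prod_pair uvvu) => [|p pu pv]; last by rewrite h1.
rewrite /h /graph_adj !inE !eqxx orbT /=.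
by case: ((u, v) \in E); case: ((v, u) \in E); rewrite /=; ring.
Qed.

Lemma prob_adj (u v : 'I_n) : u != v ->
  prob mu (fun E => graph_adj E u v) = Pn (fn u) (fn v).
Proof. by move=> uv; have := prob_nonadj uv; rewrite (probC sbm_coord_norm); lra. Qed.

Lemma prob_path2 (u v x : 'I_n) : u != v -> x != u -> x != v ->
  prob mu (fun E => graph_adj E u x && graph_adj E x v) =
  Pn (fn u) (fn x) * Pn (fn x) (fn v).
Proof.
move=> uv xu xv; rewrite /prob; under expect_ext => E do rewrite indR_andb.
have xv_off : supported_on (~: edge_coords u x) (fun E => indR (graph_adj E x v)).
  apply: supported_on_sub (adj_supported x v).
  by rewrite -disjoints_subset; exact: edge_coords_disjoint.
rewrite (expect_mul_supported sbm_coord_norm (adj_supported u x) xv_off).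
change (prob mu (fun E => graph_adj E u x) * prob mu (fun E => graph_adj E x v) =
        Pn (fn u) (fn x) * Pn (fn x) (fn v)).
by rewrite !prob_adj // eq_sym.
Qed.

Lemma expect_no_common_nbr (u v : 'I_n) (s : seq 'I_n) :
  u != v -> uniq s -> {in s, forall x, (x != u) && (x != v)} ->
  expect mu (fun E =>
    \big[Rmult/1]_(x <- s) indR (~~ (graph_adj E u x && graph_adj E x v))) =
  \big[Rmult/1]_(x <- s) (1 - Pn (fn u) (fn x) * Pn (fn x) (fn v)).
Proof.
move=> uv us sQ; rewrite (expect_prod_supported sbm_coord_norm (S := common_nbr_coords u v)) //.
- apply: eq_big_seq => x /sQ /andP [xu xv].
  have := probC sbm_coord_norm (fun E => graph_adj E u x && graph_adj E x v).
  by rewrite prob_path2 // => <-.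
- move=> x y /sQ /andP [xu xv] /sQ /andP [yu yv] xy.
  exact: common_nbr_coords_disjoint.
- move=> x; exact: common_nbr_supported.
Qed.

Lemma prob_dist_gt2_le_nonadj (u v : 'I_n) : u != v ->
  prob mu (fun E => dist_gt2 E u v) <= 1 - Pn (fn u) (fn v).
Proof.
move=> uv; rewrite -(prob_nonadj uv).
by apply: (prob_le sbm_coord_ge0) => E /andP [].
Qed.

Lemma prob_dist_gt2_le_exp (u v : 'I_n) : u != v ->
  prob mu (fun E => dist_gt2 E u v) <=
  exp (2 - \big[Rplus/0]_(x : 'I_n) (Pn (fn u) (fn x) * Pn (fn x) (fn v))).
Proof.
move=> uv; pose s := [seq x <- index_enum 'I_n | (x != u) && (x != v)].
have us : uniq s by rewrite filter_uniq // index_enum_uniq.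
have sQ : {in s, forall x, (x != u) && (x != v)} by move=> x; rewrite mem_filter => /andP [].
have P2_01 x : 0 <= Pn (fn u) (fn x) * Pn (fn x) (fn v) <= 1.
  by have := P01 (fn u) (fn x); have := P01 (fn x) (fn v); split; nra.
apply: (Rle_trans _ (expect mu (fun E =>
  \big[Rmult/1]_(x <- s) indR (~~ (graph_adj E u x && graph_adj E x v))))).
  apply: (expect_le sbm_coord_ge0) => E; rewrite /dist_gt2.
  case: existsP => [_ | no_path]; rewrite ?andbF.
    by apply: prodR_ge0 => x _; exact: indR_ge0.
  rewrite big1 ?andbT => [|x _]; first by exact: indR_le1.
  by case: (boolP (_ && _)) => // path; case: no_path; exists x.
rewrite expect_no_common_nbr //; apply: Rle_trans (prod_1sub_le_exp _ P2_01) _.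
apply: exp_le; rewrite /s big_filter.
have shift a b : b <= a + 2 -> - a <= 2 - b by lra.
apply: shift; exact: sumR_le_drop2 uv (proj2 (P2_01 u)) (proj2 (P2_01 v)).
Qed.

Lemma union_bound_dist_gt2 :
  1 - prob mu (@diam_le2 n) <=
  \big[Rplus/0]_(u : 'I_n) \big[Rplus/0]_(v | u != v) prob mu (fun E => dist_gt2 E u v).
Proof.
have -> : \big[Rplus/0]_(u : 'I_n) \big[Rplus/0]_(v | u != v) prob mu (fun E => dist_gt2 E u v) =
    expect mu (fun E => \big[Rplus/0]_(u : 'I_n) \big[Rplus/0]_(v | u != v)
                          indR (dist_gt2 E u v)).
  by rewrite expect_sum; apply: eq_bigr => u _; rewrite expect_sum.
rewrite -(probC sbm_coord_norm); apply: (expect_le sbm_coord_ge0) => E.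
rewrite diam_le2_negE; apply: Rle_trans (indR_exists_le_sum _) _.
apply: ler_sumR => u _; apply: Rle_trans (indR_exists_le_sum _) _.
by rewrite [X in _ <= X]big_mkcond; apply: Req_le; apply: eq_bigr => v _; case: (u != v).
Qed.

Definition expected_far_pairs (i j : 'I_c) : R :=
  \big[Rplus/0]_(u | fn u == i) \big[Rplus/0]_(v | (u != v) && (fn v == j))
    prob mu (fun E => dist_gt2 E u v).

Lemma sbm_prob_diam_le2_ge :
  1 - \big[Rplus/0]_(i : 'I_c) \big[Rplus/0]_(j : 'I_c) expected_far_pairs i j <=
  sbm_prob fn Pn (@diam_le2 n).
Proof.
have := union_bound_dist_gt2.
by rewrite (sum_pairs_by_block fn) sbm_prob_prob /expected_far_pairs; lra.
Qed.

Lemma expected_far_pairs_ge0 i j : 0 <= expected_far_pairs i j.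
Proof.
apply: sumR_ge0 => u _; apply: sumR_ge0 => v _.
exact: (prob_ge0 sbm_coord_ge0).
Qed.

Lemma expected_far_pairs_le (i j : 'I_c) (K : 'I_c -> 'I_c -> R) :
  (forall u v, u != v -> prob mu (fun E => dist_gt2 E u v) <= K (fn u) (fn v)) ->
  expected_far_pairs i j <= INR (block_size fn i) * INR (block_size fn j - (i == j)) * K i j.
Proof.
move=> bound; rewrite -sum_block_pairs_const; apply: ler_sumR => u /eqP fu.
by apply: ler_sumR => v /andP [uv /eqP fv]; rewrite -fu -fv; exact: bound.
Qed.

End StochasticBlockModel.

Lemma cv0_squeeze (a b : nat -> R) (N : nat) :
  (forall n, (N <= n)%nat -> 0 <= a n <= b n) -> Un_cv b 0 -> Un_cv a 0.
Proof.
move=> ab b0 eps eps0; have [M bM] := b0 eps eps0.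
exists (maxn M N) => n /leP; rewrite geq_max => /andP [/leP Mn Nn].
have := bM n Mn; have := ab n Nn; rewrite /Rdist !Rminus_0_r => abn.
by rewrite !Rabs_right; lra.
Qed.

Lemma cv0_scal (k : R) (s : nat -> R) : Un_cv s 0 -> Un_cv (fun n => k * s n) 0.
Proof.
move=> s0; rewrite -(Rmult_0_r k); apply: (CV_mult _ _ _ _ _ s0).
by move=> eps eps0; exists 0%nat => m _; rewrite /Rdist Rminus_diag_eq // Rabs_R0.
Qed.

Lemma sum_cv0 (I : Type) (r : seq I) (F : I -> nat -> R) :
  (forall i, Un_cv (F i) 0) -> Un_cv (fun n => \big[Rplus/0]_(i <- r) F i n) 0.
Proof.
move=> F0; elim: r => [|i r IHr].
  by move=> eps eps0; exists 0%nat => n _; rewrite big_nil /Rdist Rminus_0_r Rabs_R0.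
move=> eps eps0; have [N sN] := CV_plus _ _ _ _ (F0 i) IHr eps eps0.
by exists N => n Nn; rewrite big_cons; have := sN n Nn; rewrite Rplus_0_r.
Qed.

Lemma cv0_not_limsup_pos (s : nat -> R) :
  (forall n, 0 <= s n) -> ~ limsup_pos s -> Un_cv s 0.
Proof.
move=> s0 not_pos eps eps0.
have [N sN] : exists N, forall n, (N <= n)%nat -> s n <= eps / 2.
  apply: NNPP => no_N; apply: not_pos; exists (eps / 2); split; first lra.
  move=> N; apply: NNPP => small; apply: no_N; exists N => n Nn.
  by apply: Rnot_lt_le => big; apply: small; exists n.
exists N => n /leP Nn; have := sN n Nn; have := s0 n.
by rewrite /Rdist Rminus_0_r => ? ?; rewrite Rabs_right; lra.
Qed.

Lemma cv0_mul_exp_neg_ln (x : nat -> R) (C : R) :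
  1 < C -> cv_infty x -> Un_cv (fun n => x n * exp (2 - C * ln (x n))) 0.
Proof.
move=> C1 xoo eps eps0; pose L := (ln eps - 2) / (1 - C).
have [N xN] := xoo (exp L); exists N => n /xN xL.
have x0 : 0 < x n by have := exp_pos L; lra.
have lnx : L < ln (x n) by rewrite -[L]ln_exp; apply: ln_increasing => //; exact: exp_pos.
have -> : x n * exp (2 - C * ln (x n)) = exp (2 + (1 - C) * ln (x n)).
  by rewrite -{1}(exp_ln _ x0) -exp_plus; congr exp; ring.
rewrite /Rdist Rminus_0_r Rabs_right; last by left; exact: exp_pos.
rewrite -[X in _ < X](exp_ln _ eps0); apply: exp_increasing.
have : (1 - C) * ln (x n) < (1 - C) * L by apply: Rmult_lt_gt_compat_neg_l; lra.
have -> : (1 - C) * L = ln eps - 2 by rewrite /L; field; lra.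
lra.
Qed.

Lemma cv1_squeeze (a b : nat -> R) :
  (forall n, 1 - b n <= a n <= 1) -> Un_cv b 0 -> Un_cv a 1.
Proof.
move=> ab b0 eps eps0; have [N bN] := b0 eps eps0; exists N => n Nn.
have := bN n Nn; have := ab n; have := Rle_abs (b n); rewrite /Rdist Rminus_0_r => ? ? ?.
by rewrite Rabs_minus_sym Rabs_right; lra.
Qed.

Section Asymptotics.

Variables (c : nat) (f : forall n : nat, 'I_n -> 'I_c) (P : nat -> 'I_c -> 'I_c -> R).
Arguments f : clear implicits.
Hypothesis Psym : forall n i j, P n i j = P n j i.
Hypothesis P01 : forall n i j, 0 <= P n i j <= 1.

Lemma expected_far_pairs_cv0_outside_K (i j : 'I_c) :
  ~ in_K f P i j -> Un_cv (fun n => expected_far_pairs (f n) (P n) i j) 0.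
Proof.
move=> notK; pose s n := pair_count (f n) i j * (1 - P n i j).
apply: (cv0_squeeze (b := fun n => 2 * s n) (N := 0)) => [n _ |].
  split; first exact: expected_far_pairs_ge0.
  apply: Rle_trans (expected_far_pairs_le i j (K := fun i j => 1 - P n i j) _) _.
    by move=> u v uv; exact: (prob_dist_gt2_le_nonadj (f n) (Psym n) (P01 n)).
  rewrite /s -Rmult_assoc; apply: Rmult_le_compat_r (card_block_pairs_le_pair_count _ _ _).
  by have := P01 n i j; lra.
apply: cv0_scal; apply: cv0_not_limsup_pos notK => n.
apply: Rmult_le_pos; last by have := P01 n i j; lra.
by rewrite /pair_count; case: (i == j); exact: pos_INR.
Qed.

Lemma expected_far_pairs_cv0_of_degree (i j : 'I_c) (C : R) (N : nat) : 1 < C ->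
  cv_infty (fun n => INR (block_size (f n) i * block_size (f n) j)) ->
  (forall n, (N <= n)%nat ->
     C * ln (INR (block_size (f n) i * block_size (f n) j)) <=
     \big[Rplus/0]_(k < c) (INR (block_size (f n) k) * P n i k * P n k j)) ->
  Un_cv (fun n => expected_far_pairs (f n) (P n) i j) 0.
Proof.
move=> C1 xoo deg; apply: (cv0_squeeze (N := N) _ (cv0_mul_exp_neg_ln C1 xoo)) => n Nn.
split; first exact: expected_far_pairs_ge0.
pose S i j := \big[Rplus/0]_(k < c) (INR (block_size (f n) k) * (P n i k * P n k j)).
apply: Rle_trans (expected_far_pairs_le i j (K := fun i j => exp (2 - S i j)) _) _.
  move=> u v uv; rewrite /S -(sum_by_block (f n) (fun k => P n (f n u) k * P n k (f n v))).
  exact: (prob_dist_gt2_le_exp (f n) (Psym n) (P01 n)).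
apply: Rmult_le_compat (card_block_pairs_le _ _ _) _.
- by apply: Rmult_le_pos; exact: pos_INR.
- by left; exact: exp_pos.
apply: exp_le; have := deg n Nn.
rewrite /S; under eq_bigr => k _ do rewrite Rmult_assoc.
by move=> degn; apply/Rplus_le_compat_l/Ropp_le_contravar.
Qed.

End Asymptotics.

Theorem lemma3p1 (c : nat) (hc : (1 <= c)%nat)
  (f : forall n : nat, 'I_n -> 'I_c)
  (P : nat -> 'I_c -> 'I_c -> R)
  (Psym : forall (n : nat) (i j : 'I_c), P n i j = P n j i)
  (P01 : forall (n : nat) (i j : 'I_c), Rle 0 (P n i j) /\ Rle (P n i j) 1)
  (hinf : forall i j : 'I_c, in_K f P i j ->
     cv_infty (fun n => INR (block_size (f n) i * block_size (f n) j)))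
  (hdeg : exists C : R, Rlt 1 C /\ exists N : nat, forall n : nat, (N <= n)%nat ->
     forall i j : 'I_c, in_K f P i j ->
       Rle (Rmult C (ln (INR (block_size (f n) i * block_size (f n) j))))
           (\big[Rplus/(IZR 0)]_(k < c) Rmult (Rmult (INR (block_size (f n) k)) (P n i k)) (P n k j))) :
  Un_cv (fun n => sbm_prob (f n) (P n) (@diam_le2 n)) (IZR 1).
Proof.
have far0 i j : Un_cv (fun n => expected_far_pairs (f n) (P n) i j) 0.
  have [iK | notK] := classic (in_K f P i j); last exact: expected_far_pairs_cv0_outside_K.
  have [C [C1 [N deg]]] := hdeg.
  exact: expected_far_pairs_cv0_of_degree C1 (hinf i j iK) (fun n Nn => deg n Nn i j iK).
apply: cv1_squeeze (sum_cv0 _ (fun i => sum_cv0 _ (far0 i))) => n.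
split; first exact: sbm_prob_diam_le2_ge.
rewrite sbm_prob_prob; apply: prob_le1; [exact: sbm_coord_norm | exact: sbm_coord_ge0 (P01 n)].
Qed.
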